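(* Every boolean UCQ can be compactly provisioned (exactly) using sketches of size $O(k^b)$ bits, where $b$ is the maximum size (number of body atoms) of a conjunctive query in the UCQ and $k$ is the number of hypotheticals.
   Context: A conjunctive query (CQ) is a rule $\mathit{ans}(\bar x)\,{:\!-}\,R_1(\bar x_1),\dots,R_b(\bar x_b)$; its size is the number $b$ of body atoms. A UCQ is a finite union of CQs whose heads have the same schema; it is boolean if its head has no variables (it returns true/false). The query is fixed (constant size). A hypothetical $h$ maps each instance $I$ to a sub-instance $h(I)\subseteq I$; for hypotheticals $h_1,\dots,h_k$ and nonempty scenario $S\subseteq[k]$, $I[S]=\bigcup_{i\in S}h_i(I)$. A provisioning scheme: a compression algorithm mapping $(I,h_1,\dots,h_k)$ to a sketch $\Gamma$, and an extraction algorithm that, for any scenario $S$ and using only $\Gamma$ (no access to $I$), outputs $Q(I[S])$. *)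

From mathcomp Require Import all_boot.
Set Implicit Arguments. Unset Strict Implicit. Unset Printing Implicit Defensive.

(* Constants of the (infinite) domain and query variables are both nat.
   Relation symbols are named by nat. *)
Definition const := nat.
Definition var := nat.

Definition fact := (nat * seq const)%type.
(* An instance is a finite set of facts (represented by a list). *)
Definition instance := seq fact.

Definition atom := (nat * seq var)%type.
Definition bcq := seq atom.
Definition bucq := seq bcq.

Definition cq_size (q : bcq) : nat := size q.
Definition ucq_maxsize (Q : bucq) : nat := \max_(q <- Q) cq_size q.

Definition cq_holds (q : bcq) (I : instance) : Prop :=
  exists v : var -> const, forall a, a \in q -> (a.1, map v a.2) \in I.

Definition ucq_holds (Q : bucq) (I : instance) : Prop :=
  exists2 q, q \in Q & cq_holds q I.

Definition hypothetical (h : instance -> instance) : Prop :=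
  forall J : instance, {subset h J <= J}.

Definition scenario_inst (k : nat) (I : instance)
  (h : 'I_k -> instance -> instance) (S : {set 'I_k}) : instance :=
  flatten [seq h i I | i <- enum S].

Definition compressor := forall k : nat, instance -> ('I_k -> instance -> instance) -> seq bool.
Definition extractor := forall k : nat, seq bool -> {set 'I_k} -> bool.

Definition provisions (Q : bucq) (comp : compressor) (extr : extractor) : Prop :=
  forall (k : nat) (I : instance) (h : 'I_k -> instance -> instance),
    (forall i, hypothetical (h i)) ->
    forall S : {set 'I_k}, S != set0 ->
      (extr k (comp k I h) S <-> ucq_holds Q (scenario_inst I h S)).

Definition sketch_size_bigO (comp : compressor) (f : nat -> nat) : Prop :=
  exists C N : nat, forall (k : nat) (I : instance) (h : 'I_k -> instance -> instance),
    (forall i, hypothetical (h i)) -> N <= k -> size (comp k I h) <= C * f k.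

From mathcomp Require Import all_boot.
From mathcomp Require Import boolp.
Set Implicit Arguments. Unset Strict Implicit. Unset Printing Implicit Defensive.

(* A boolean CQ with at most [b] atoms is satisfied using facts from at most
   [b] hypotheticals, and UCQs are monotone; hence [Q(I[S])] holds iff
   [Q(I[T])] holds for some [T] included in [S] with at most [b] elements.
   The sketch stores [Q(I[T])] for the range [T] of every map [t : 'I_b -> 'I_k],
   that is [k ^ b] bits, and extraction looks for such a [t] with range in [S]. *)

Lemma mem_scenario_inst k I (h : 'I_k -> instance -> instance) S x :
  (x \in scenario_inst I h S) = [exists i in S, x \in h i I].
Proof.
apply/flatten_mapP/existsP => [[i iS xi] | [i /andP [iS xi]]].
  by exists i; rewrite -mem_enum iS.
by exists i; rewrite ?mem_enum.
Qed.

Lemma scenario_inst_subset k I (h : 'I_k -> instance -> instance) (T S : {set 'I_k}) :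
  T \subset S -> {subset scenario_inst I h T <= scenario_inst I h S}.
Proof.
move=> TS x; rewrite !mem_scenario_inst => /exists_inP [i iT xi].
by apply/exists_inP; exists i; rewrite ?(subsetP TS).
Qed.

Lemma ucq_holds_mono Q (I J : instance) :
  {subset I <= J} -> ucq_holds Q I -> ucq_holds Q J.
Proof. by move=> IJ [q qQ [v Hv]]; exists q => //; exists v => a /Hv /IJ. Qed.

Definition ffun_range n k (t : {ffun 'I_n -> 'I_k}) : {set 'I_k} :=
  [set t j | j : 'I_n].

Lemma cq_holds_small_scenario n q k I (h : 'I_k -> instance -> instance) S :
  size q <= n -> S != set0 -> cq_holds q (scenario_inst I h S) ->
  exists2 t : {ffun 'I_n -> 'I_k},
    ffun_range t \subset S & cq_holds q (scenario_inst I h (ffun_range t)).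
Proof.
move=> qn /set0Pn [i0 i0S] [v Hv].
pose fact_of (a : atom) : fact := (a.1, map v a.2).
(* the default [i0] only serves the indices [j >= size q]: hence [S != set0] *)
pose hyp_of (j : nat) : 'I_k :=
  odflt i0 [pick i in S | fact_of (nth (0, [::]) q j) \in h i I].
pose t := [ffun j : 'I_n => hyp_of j].
have hyp_ofS j : hyp_of j \in S by rewrite /hyp_of; case: pickP => [? /andP []|].
exists t; first by apply/subsetP => _ /imsetP [j _ ->]; rewrite ffunE hyp_ofS.
exists v => a aq; rewrite mem_scenario_inst.
move: (Hv a aq); rewrite mem_scenario_inst => /exists_inP [i iS ai].
have ltan : index a q < n by apply: leq_trans qn; rewrite index_mem.
apply/exists_inP; exists (hyp_of (index a q)).
  by apply/imsetP; exists (Ordinal ltan); rewrite ?ffunE.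
rewrite /hyp_of nth_index //; case: pickP => [? /andP [] // | /(_ i)].
by rewrite iS ai.
Qed.

Section Scheme.
Variable Q : bucq.
Let b := ucq_maxsize Q.

(* The answers are decided classically; a compressor need not be computable. *)
Definition ucq_sketch : compressor := fun k I h =>
  [seq `[< ucq_holds Q (scenario_inst I h (ffun_range t)) >]
     | t <- enum {ffun 'I_b -> 'I_k}].

Definition ucq_extract : extractor := fun k s S =>
  [exists t : {ffun 'I_b -> 'I_k},
     (ffun_range t \subset S) && nth false s (enum_rank t)].

Lemma nth_ucq_sketch k I h (t : {ffun 'I_b -> 'I_k}) :
  nth false (ucq_sketch I h) (enum_rank t)
  = `[< ucq_holds Q (scenario_inst I h (ffun_range t)) >].
Proof.
by rewrite /ucq_sketch (nth_map t) ?nth_enum_rank // -cardE ltn_ord.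
Qed.

Lemma size_ucq_sketch k I h : size (@ucq_sketch k I h) = k ^ b.
Proof. by rewrite size_map -cardE card_ffun !card_ord. Qed.

Lemma ucq_sketch_provisions : provisions Q ucq_sketch ucq_extract.
Proof.
move=> k I h _ S SN; split.
  case/existsP=> t /andP [tS]; rewrite nth_ucq_sketch => /asboolP.
  exact/ucq_holds_mono/scenario_inst_subset.
move=> [q qQ Hq].
have qb : size q <= b by exact: (@leq_bigmax_seq _ Q predT cq_size q qQ).
have [t tS Ht] := cq_holds_small_scenario qb SN Hq.
apply/existsP; exists t; rewrite tS nth_ucq_sketch.
by apply/asboolP; exists q.
Qed.

End Scheme.

Theorem mainTheorem12 (Q : bucq) :
  exists (comp : compressor) (extr : extractor),
    provisions Q comp extr /\
    sketch_size_bigO comp (fun k => k ^ ucq_maxsize Q).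
Proof.
exists (ucq_sketch Q), (ucq_extract Q); split; first exact: ucq_sketch_provisions.
by exists 1, 0 => k I h _ _; rewrite mul1n size_ucq_sketch.
Qed.
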